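(* Let $\alpha\in(0,1)$, $\epsilon>0$, $b>0$, fix a prior $\rho$ and secrets $s_i,s_j$, and let $\pi$ be a coupling of $P_{X|s_i,\rho}$ and $P_{X|s_j,\rho}$. Let $Y=X+N$ with $N\sim\mathrm{Lap}(b)$ (density $\frac{1}{2b}e^{-|z|/b}$) independent of $(X,S)$. If $$\int e^{-\alpha\frac{|x-x'|}{b}}\,\mathrm{d}\pi(x,x')\ \ge\ e^{(\alpha-1)\epsilon},$$ then $D_\alpha(P_{Y|s_i,\rho}\,\|\,P_{Y|s_j,\rho})\le\epsilon$.
   Context: Setting: a sensitive secret $S$ and real-valued data $X$; for each secret value $s$ and prior belief $\rho$, $X$ given $S=s$ has a density $P_{X|s,\rho}$ on $\mathbb{R}$. The released data $Y=X+N$ has conditional density $P_{Y|S}(y|s,\rho)=\int P_N(y-x)P_{X|S}(x|s,\rho)\,\mathrm{d}x$. For densities $P,Q$ the Rényi divergence of order $\alpha\in(0,1)$ is $D_\alpha(P\|Q)=\frac{1}{\alpha-1}\log\int P(y)^\alpha Q(y)^{1-\alpha}\,\mathrm{d}y$. A coupling of two distributions on $\mathbb{R}$ is a joint distribution on $\mathbb{R}^2$ having them as marginals. *)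

From HB Require Import structures.
From mathcomp Require Import all_boot all_order all_algebra.
From mathcomp Require Import all_classical all_reals all_analysis.
Set Implicit Arguments. Unset Strict Implicit. Unset Printing Implicit Defensive.
Import Order.TTheory GRing.Theory Num.Theory.
Local Open Scope classical_set_scope.
Local Open Scope ring_scope.

Definition lap_density {R : realType} (b : R) (z : R) : R :=
  (2 * b)^-1 * expR (- `|z| / b).

Definition is_density {R : realType} (p : R -> R) : Prop :=
  measurable_fun setT p /\ (forall x, 0 <= p x) /\
  (\int[@lebesgue_measure R]_(x in setT) (p x)%:E = 1)%E.

(* density of Y = X + N, N with density pN independent of X with density pX *)
Definition conv_density {R : realType} (pN pX : R -> R) (y : R) : R :=
  Rintegral (@lebesgue_measure R) setT (fun x => pN (y - x) * pX x).

Definition renyi_div {R : realType} (alpha : R) (P Q : R -> R) : R :=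
  (alpha - 1)^-1 * ln (Rintegral (@lebesgue_measure R) setT
                         (fun y => P y `^ alpha * Q y `^ (1 - alpha))).

Definition is_coupling {R : realType} (pi : probability (R * R)%type R)
    (p q : R -> R) : Prop :=
  (forall A : set R, measurable A ->
     pi (A `*` setT) = (\int[@lebesgue_measure R]_(x in A) (p x)%:E)%E) /\
  (forall A : set R, measurable A ->
     pi (setT `*` A) = (\int[@lebesgue_measure R]_(x in A) (q x)%:E)%E).

From HB Require Import structures.
From mathcomp Require Import all_boot all_order all_algebra.
From mathcomp Require Import all_classical all_reals all_analysis.
From mathcomp Require Import measurable_realfun ring.
Import Order.TTheory GRing.Theory Num.Theory.
Import numFieldNormedType.Exports.
Local Open Scope classical_set_scope.
Local Open Scope ring_scope.

(* By the coupling, the two output densities are pi-averages of shifted Laplace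
   densities: P(y) = E_pi[L(y - x)] and Q(y) = E_pi[L(y - x')].  Hoelder's
   inequality (concavity of (u, v) |-> u^al v^(1-al)) gives
   P(y)^al Q(y)^(1-al) >= E_pi[L(y - x)^al L(y - x')^(1-al)], and
   L(y - x) >= L(y - x') e^(-|x - x'|/b) bounds the y-integral of the right-hand
   side below by e^(-al |x - x'|/b).  By Tonelli, the integral in the Renyi
   divergence is at least E_pi[e^(-al |x - x'|/b)] >= e^((al-1) eps), and taking
   logarithms and dividing by al - 1 < 0 concludes. *)

Section integral_density.
Local Open Scope ereal_scope.
Context d (T : measurableType d) (R : realType).
Variables (nu : {finite_measure set T -> \bar R})
          (mu : {sigma_finite_measure set T -> \bar R}) (g : T -> R).
Hypothesis mg : measurable_fun setT g.
Hypothesis nuE : forall A, measurable A -> nu A = \int[mu]_(x in A) (g x)%:E.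

Let nu_dominated : nu `<< mu.
Proof.
move=> N muN A mA AN; rewrite nuE //.
apply: null_set_integral => //; last exact: muN.
exact/measurable_EFinP/measurable_funTS.
Qed.

Let Radon_Nikodym_ae :
  ae_eq mu setT (Radon_Nikodym_SigmaFinite.f nu mu) (EFin \o g).
Proof.
apply: integral_ae_eq => //.
- exact: Radon_Nikodym_SigmaFinite.f_integrable.
- exact/measurable_EFinP.
- by move=> A _ mA; rewrite -nuE // -Radon_Nikodym_SigmaFinite.f_integral.
Qed.

Lemma integral_density (f : T -> \bar R) : (forall x, 0 <= f x) ->
  measurable_fun setT f -> \int[nu]_x f x = \int[mu]_x (f x * (g x)%:E).
Proof.
move=> f0 mf.
rewrite -(Radon_Nikodym_SigmaFinite.change_of_variables nu_dominated) //.
apply: ae_eq_integral => //.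
- apply: emeasurable_funM => //.
  exact: measurable_int (Radon_Nikodym_SigmaFinite.f_integrable _).
- exact/emeasurable_funM/measurable_EFinP.
- exact: ae_eqe_mul2l.
Qed.

End integral_density.

Lemma integral_gt0 d (T : measurableType d) (R : realType)
    (mu : {measure set T -> \bar R}) (f : T -> R) :
  measurable_fun setT f -> (forall x, 0 < f x) -> (0 < mu setT)%E ->
  (0 < \int[mu]_x (f x)%:E)%E.
Proof.
move=> mf f_gt0 muT; rewrite lt0e integral_ge0 ?andbT; last first.
  by move=> x _; rewrite lee_fin ltW.
apply/eqP => f0.
have mEf : measurable_fun setT (EFin \o f) by exact/measurable_EFinP.
have : ae_eq mu setT (EFin \o f) (cst 0%E).
  apply/(ae_eq_integral_abs _ measurableT mEf).
  by under eq_integral do rewrite gee0_abs ?lee_fin ?ltW //.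
case=> N [mN N0 fN].
suff TN : setT `<=` N by move: muT; rewrite (subset_measure0 _ _ TN N0) ?ltxx.
by move=> x _; apply: fN => /(_ I) /eqP; rewrite eqe gt_eqF.
Qed.

Section weighted_geometric_mean.
Context {R : realType} (al : R).
Hypotheses (al_gt0 : 0 < al) (al_lt1 : al < 1).

Lemma weighted_AGM2 a c : 0 < a -> 0 < c ->
  a `^ al * c `^ (1 - al) <= al * a + (1 - al) * c.
Proof.
move=> a_gt0 c_gt0; rewrite /powR !gt_eqF // -expRD.
have := convex_expR (Itv01 (ltW al_gt0) (ltW al_lt1)) (ln a) (ln c).
by rewrite !convRE /= !lnK ?posrE.
Qed.

Lemma geo_mean_le_tangent u v U V : 0 < u -> 0 < v -> 0 < U -> 0 < V ->
  u `^ al * v `^ (1 - al) <=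
  U `^ al * V `^ (1 - al) * (al * (u / U) + (1 - al) * (v / V)).
Proof.
move=> u_gt0 v_gt0 U_gt0 V_gt0.
have [a a_gt0 ->] : exists2 a, 0 < a & u = a * U.
  by exists (u / U); rewrite ?divr_gt0 // divfK // gt_eqF.
have [c c_gt0 ->] : exists2 c, 0 < c & v = c * V.
  by exists (v / V); rewrite ?divr_gt0 // divfK // gt_eqF.
rewrite !powRM ?(ltW a_gt0) ?(ltW c_gt0) ?(ltW U_gt0) ?(ltW V_gt0) //.
rewrite !mulfK ?gt_eqF //.
rewrite mulrACA [X in X <= _]mulrC ler_pM2l ?mulr_gt0 ?powR_gt0 //.
exact: weighted_AGM2.
Qed.

(* Hoelder's inequality for the exponents 1/al and 1/(1 - al), obtained by
   integrating [geo_mean_le_tangent] at (U, V). *)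
Lemma integral_geo_mean_le d (T : measurableType d)
    (mu : {measure set T -> \bar R}) (f g : T -> R) (U V : R) :
  measurable_fun setT f -> measurable_fun setT g ->
  (forall x, 0 < f x) -> (forall x, 0 < g x) -> 0 < U -> 0 < V ->
  (\int[mu]_x (f x)%:E = U%:E)%E -> (\int[mu]_x (g x)%:E = V%:E)%E ->
  (\int[mu]_x (f x `^ al * g x `^ (1 - al))%:E <= (U `^ al * V `^ (1 - al))%:E)%E.
Proof.
move=> mf mg f_gt0 g_gt0 U_gt0 V_gt0 fU gV.
set K := U `^ al * V `^ (1 - al).
have cf_ge0 : 0 <= K * al / U by rewrite !mulr_ge0 ?powR_ge0 ?invr_ge0 ?ltW.
have cg_ge0 : 0 <= K * (1 - al) / V.
  by rewrite !mulr_ge0 ?powR_ge0 ?invr_ge0 ?subr_ge0 ?ltW.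
have f_ge0 x : (0 <= (f x)%:E)%E by rewrite lee_fin ltW.
have g_ge0 x : (0 <= (g x)%:E)%E by rewrite lee_fin ltW.
apply: (@le_trans _ _ (\int[mu]_x (K * al / U * f x + K * (1 - al) / V * g x)%:E)%E).
  apply: ge0_le_integral => //.
  - by move=> x _; rewrite lee_fin mulr_ge0 ?powR_ge0.
  - apply/measurable_EFinP; apply: measurable_funM.
      exact: measurableT_comp (measurable_powR _) mf.
    exact: measurableT_comp (measurable_powR _) mg.
  - by apply/measurable_EFinP; apply: measurable_funD; exact: measurable_funM.
  move=> x _; rewrite lee_fin.
  suff -> : K * al / U * f x + K * (1 - al) / V * g x =
            K * (al * (f x / U) + (1 - al) * (g x / V)).
    exact: geo_mean_le_tangent.
  by field; rewrite !gt_eqF.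
under eq_integral do rewrite EFinD !EFinM.
rewrite ge0_integralD //; last 4 first.
- by move=> x _; rewrite mule_ge0.
- exact/emeasurable_funM/measurable_EFinP.
- by move=> x _; rewrite mule_ge0.
- exact/emeasurable_funM/measurable_EFinP.
rewrite !ge0_integralZl_EFin //; last 2 first.
- exact/measurable_EFinP.
- exact/measurable_EFinP.
rewrite fU gV -!EFinM -EFinD lee_fin -/K !divfK ?gt_eqF //.
by rewrite -mulrDr addrC subrK mulr1.
Qed.

End weighted_geometric_mean.

Section coupling_marginals.
Local Open Scope ereal_scope.
Context {R : realType}.
Local Notation mu := (@lebesgue_measure R).

(* [fst] and [snd] land in the default measurable structure of [R]; these
   copies land in [measurableTypeR R], where [lebesgue_measure] lives. *)
Definition fstR (z : R * R) : measurableTypeR R := z.1.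
Definition sndR (z : R * R) : measurableTypeR R := z.2.
HB.instance Definition _ := isMeasurableFun.Build _ _ _ _ fstR measurable_fst.
HB.instance Definition _ := isMeasurableFun.Build _ _ _ _ sndR measurable_snd.

Lemma integral_distribution_density d (T : measurableType d)
    (P : probability T R) (X : {mfun T >-> measurableTypeR R}) (p : R -> R)
    (f : R -> \bar R) :
  is_density p ->
  (forall A, measurable A -> P (X @^-1` A) = \int[mu]_(x in A) (p x)%:E) ->
  (forall x, 0 <= f x) -> measurable_fun setT f ->
  \int[P]_z f (X z) = \int[mu]_x (f x * (p x)%:E).
Proof.
move=> [mp _] PX f0 mf.
by rewrite -(ge0_integral_distribution X mf f0); exact: integral_density.
Qed.

Context { pi : probability (R * R)%type R } {p q : R -> R}.
Hypothesis pi_coupling : is_coupling pi p q.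

Lemma integral_coupling_fst : is_density p -> forall f : R -> \bar R,
  (forall x, 0 <= f x) -> measurable_fun setT f ->
  \int[pi]_z f z.1 = \int[mu]_x (f x * (p x)%:E).
Proof.
move=> dp f; apply: (@integral_distribution_density _ _ pi fstR) => // A mA.
by rewrite -setXT; exact: pi_coupling.1.
Qed.

Lemma integral_coupling_snd : is_density q -> forall f : R -> \bar R,
  (forall x, 0 <= f x) -> measurable_fun setT f ->
  \int[pi]_z f z.2 = \int[mu]_x (f x * (q x)%:E).
Proof.
move=> dq f; apply: (@integral_distribution_density _ _ pi sndR) => // A mA.
by rewrite -setTX; exact: pi_coupling.2.
Qed.

End coupling_marginals.

Section convolution_marginal.
Local Open Scope ereal_scope.
Context {R : realType}.
Local Notation mu := (@lebesgue_measure R).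
Context {pN : R -> R} {c : R}.
Hypotheses (mpN : measurable_fun setT pN) (pN_gt0 : forall z, (0 < pN z)%R)
  (pN_le : forall z, (pN z <= c)%R).
Context { pi : probability (R * R)%type R } {pr : R * R -> R} {r : R -> R}.
Hypothesis mpr : measurable_fun setT pr.
Hypothesis integral_pr : forall f : R -> \bar R, (forall x, 0 <= f x) ->
  measurable_fun setT f -> \int[pi]_z f (pr z) = \int[mu]_x (f x * (r x)%:E).

Let mnoise y : measurable_fun setT (fun z => pN (y - pr z)).
Proof. exact/(measurableT_comp mpN)/measurable_funB. Qed.

Let integral_noise_fin y : \int[pi]_z (pN (y - pr z))%:E \is a fin_num.
Proof.
rewrite ge0_fin_numE; last by apply: integral_ge0 => z _; rewrite lee_fin ltW.
apply: (@le_lt_trans _ _ (\int[pi]_z c%:E)); last first.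
  by rewrite integral_cst // [X in _ * X]probability_setT mule1 ltry.
apply: ge0_le_integral => //; first by move=> z _; rewrite lee_fin ltW.
  exact/measurable_EFinP.
by move=> z _; rewrite lee_fin.
Qed.

Lemma conv_densityE y : (conv_density pN r y)%:E = \int[pi]_z (pN (y - pr z))%:E.
Proof.
rewrite /conv_density /Rintegral.
rewrite -(integral_pr (fun x => (pN (y - x))%:E)) ?fineK ?integral_noise_fin //.
- by move=> x; rewrite lee_fin ltW.
- exact/measurable_EFinP/(measurableT_comp mpN)/measurable_funB.
Qed.

Lemma conv_density_gt0 y : (0 < conv_density pN r y)%R.
Proof.
by rewrite -lte_fin conv_densityE integral_gt0 // [X in _ < X]probability_setT.
Qed.

Lemma measurable_conv_density :
  measurable_fun (setT : set (measurableTypeR R)) (conv_density pN r).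
Proof.
apply/measurable_EFinP.
pose F (w : measurableTypeR R * (R * R)) := (pN (w.1 - pr w.2))%:E.
have -> : EFin \o conv_density pN r = fubini_F pi F.
  by apply/funext => y; rewrite /= conv_densityE.
apply: measurable_fun_fubini_tonelli_F => [|w]; last by rewrite lee_fin ltW.
apply/measurable_EFinP/(measurableT_comp mpN)/measurable_funB => //.
exact: measurableT_comp mpr measurable_snd.
Qed.

End convolution_marginal.

Section coupling_convolution.
Local Open Scope ereal_scope.
Context {R : realType}.
Local Notation mu := (@lebesgue_measure R).
Context {pN : R -> R} {c al : R}.
Hypotheses (mpN : measurable_fun setT pN) (pN_gt0 : forall z, (0 < pN z)%R)
  (pN_le : forall z, (pN z <= c)%R).
Hypotheses (al_gt0 : (0 < al)%R) (al_lt1 : (al < 1)%R).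
Context { pi : probability (R * R)%type R } {p q : R -> R}.
Hypotheses (pi_coupling : is_coupling pi p q)
  (dp : is_density p) (dq : is_density q).
Local Notation P := (conv_density pN p).
Local Notation Q := (conv_density pN q).

Let integral_fst := integral_coupling_fst pi_coupling dp.
Let integral_snd := integral_coupling_snd pi_coupling dq.

Let geo_noise (w : measurableTypeR R * (R * R)) : \bar R :=
  (pN (w.1 - w.2.1) `^ al * pN (w.1 - w.2.2) `^ (1 - al))%:E.

Let measurable_geo_noise : measurable_fun setT geo_noise.
Proof.
apply/measurable_EFinP; apply: measurable_funM;
  apply: measurableT_comp (measurable_powR _) _;
  apply/(measurableT_comp mpN)/measurable_funB => //.
- exact: measurableT_comp measurable_fst measurable_snd.
- exact: measurableT_comp measurable_snd measurable_snd.
Qed.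

Let geo_noise_ge0 w : 0 <= geo_noise w.
Proof. by rewrite lee_fin mulr_ge0 ?powR_ge0. Qed.

Lemma integral_noise_geo_mean_le y :
  \int[pi]_z (pN (y - z.1) `^ al * pN (y - z.2) `^ (1 - al))%:E <=
  (P y `^ al * Q y `^ (1 - al))%:E.
Proof.
apply: integral_geo_mean_le => //.
- exact/(measurableT_comp mpN)/measurable_funB.
- exact/(measurableT_comp mpN)/measurable_funB.
- exact: (conv_density_gt0 mpN pN_gt0 pN_le measurable_fst integral_fst).
- exact: (conv_density_gt0 mpN pN_gt0 pN_le measurable_snd integral_snd).
- by rewrite (conv_densityE mpN pN_gt0 pN_le measurable_fst integral_fst).
- by rewrite (conv_densityE mpN pN_gt0 pN_le measurable_snd integral_snd).
Qed.

Lemma integral_conv_geo_mean_ge (w : R * R -> R) : measurable_fun setT w ->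
  (forall z, (0 <= w z)%R) ->
  (forall z, (w z)%:E <=
     \int[mu]_y (pN (y - z.1) `^ al * pN (y - z.2) `^ (1 - al))%:E) ->
  \int[pi]_z (w z)%:E <= \int[mu]_y (P y `^ al * Q y `^ (1 - al))%:E.
Proof.
move=> mw w_ge0 w_le.
apply: (@le_trans _ _ (\int[pi]_z \int[mu]_y geo_noise (y, z))).
  apply: ge0_le_integral => //.
  - by move=> z _; rewrite lee_fin.
  - exact/measurable_EFinP.
  - exact: (measurable_fun_fubini_tonelli_G (m1 := mu) _
             measurable_geo_noise geo_noise_ge0).
rewrite -(fubini_tonelli (m1 := mu) (m2 := pi) _ measurable_geo_noise geo_noise_ge0).
apply: ge0_le_integral => //.
- by move=> y _; apply: integral_ge0 => z _; exact: geo_noise_ge0.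
- exact: (measurable_fun_fubini_tonelli_F (m2 := pi) _
           measurable_geo_noise geo_noise_ge0).
- apply/measurable_EFinP; apply: measurable_funM;
    apply: measurableT_comp (measurable_powR _) _.
  + exact: (measurable_conv_density mpN pN_gt0 pN_le measurable_fst integral_fst).
  + exact: (measurable_conv_density mpN pN_gt0 pN_le measurable_snd integral_snd).
- by move=> y _; exact: integral_noise_geo_mean_le.
Qed.

End coupling_convolution.

Section laplace_density.
Context {R : realType} {b : R}.
Hypothesis b_gt0 : 0 < b.
Local Notation L := (lap_density b).
Local Notation mu := (@lebesgue_measure R).

Lemma lap_density_gt0 z : 0 < L z.
Proof. by rewrite /lap_density mulr_gt0 ?expR_gt0 // invr_gt0 mulr_gt0. Qed.

Lemma lap_density_le z : L z <= (2 * b)^-1.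
Proof.
rewrite /lap_density ler_piMr ?invr_ge0 ?mulr_ge0 ?(ltW b_gt0) //.
by rewrite expR_le1 mulNr oppr_le0 divr_ge0 ?(ltW b_gt0).
Qed.

Lemma lap_densityN z : L (- z) = L z.
Proof. by rewrite /lap_density normrN. Qed.

Lemma continuous_lap_density : continuous L.
Proof.
move=> x; apply: (@continuousM _ R^o (cst _) (fun z => expR (- `|z| / b))).
  exact: cst_continuous.
apply: continuous_comp; last exact: continuous_expR.
apply: (@continuousM _ R^o (fun z => - `|z|) (cst _)); last exact: cst_continuous.
by apply: (@continuousN _ R^o); exact: norm_continuous.
Qed.

Lemma measurable_lap_density : measurable_fun setT L.
Proof. exact: continuous_measurable_fun continuous_lap_density. Qed.

Lemma lap_density_shift y x x' : L (y - x') * expR (- `|x - x'| / b) <= L (y - x).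
Proof.
rewrite /lap_density -mulrA ler_pM2l ?invr_gt0 ?mulr_gt0 //.
rewrite -expRD ler_expR -mulrDl ler_pM2r ?invr_gt0 // -opprD lerN2.
rewrite -[y - x](subrKA x') [`|x - x'|]distrC; exact: ler_normD.
Qed.

Let integral_lap_density_ge0 :
  (\int[mu]_(x in [set x | (0 <= x)%R]) (L x)%:E = (2^-1)%:E)%E.
Proof.
rewrite -set_itvcy integral_mkcond.
transitivity (\int[mu]_x ((2^-1)%:E * (exponential_pdf b^-1 x)%:E))%E.
  apply: eq_integral => x _; rewrite restrict_EFin -EFinM; congr EFin.
  rewrite /exponential_pdf /patch; case: ifPn => [|_]; last by rewrite mulr0.
  rewrite inE/= in_itv/= andbT => x_ge0.
  rewrite /lap_density ger0_norm // invfM -mulrA; congr (_ * (_ * expR _)).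
  by rewrite !mulNr mulrC.
rewrite ge0_integralZl ?integral_exponential_pdf ?invr_gt0 ?mule1 //.
- by apply/measurable_EFinP; exact: measurable_exponential_pdf.
- by move=> x _; rewrite lee_fin exponential_pdf_ge0 // invr_ge0 ltW.
Qed.

Lemma integral_lap_density : (\int[mu]_x (L x)%:E = 1)%E.
Proof.
rewrite ge0_symfun_integralT.
- by rewrite integral_lap_density_ge0 -EFinM mulfV.
- by move=> x; exact/ltW/lap_density_gt0.
- exact: continuous_lap_density.
- by move=> x /=; rewrite lap_densityN.
Qed.

Lemma integral_lap_density_shift c : (\int[mu]_x (L (x - c))%:E = 1)%E.
Proof.
have dE : (fun x : R => x - c)^`()%classic = cst 1.
  by apply/funext => x; rewrite derive1E deriveB // derive_id derive_cst subr0.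
rewrite -integral_lap_density.
rewrite (increasing_ge0_integration_by_substitutionT (F := fun x => x - c) (G := L)).
- by apply: eq_integral => x _; rewrite dE /= mulr1.
- by move=> x y; rewrite ltrD2r.
- by rewrite dE; exact: cst_continuous.
- by rewrite dE; exact: is_cvg_cst.
- by rewrite dE; exact: is_cvg_cst.
- by move=> x; exact: derivableB.
- exact: cvg_addrr_Ny.
- exact: cvg_addrr.
- exact: continuous_lap_density.
- by move=> x; exact/ltW/lap_density_gt0.
Qed.

End laplace_density.

Section laplace_overlap.
Context {R : realType} (b al : R).
Hypotheses (b_gt0 : 0 < b) (al_gt0 : 0 < al).
Local Notation L := (lap_density b).
Local Notation mu := (@lebesgue_measure R).

Lemma lap_density_geo_mean_ge y z1 z2 :
  expR (- al * `|z1 - z2| / b) * L (y - z2) <=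
  L (y - z1) `^ al * L (y - z2) `^ (1 - al).
Proof.
have L2_gt0 := lap_density_gt0 b_gt0 (y - z2).
have shift_al : (L (y - z2) * expR (- `|z1 - z2| / b)) `^ al <= L (y - z1) `^ al.
  apply: ge0_ler_powR; rewrite ?nnegrE ?(ltW al_gt0) ?lap_density_shift //.
  - by rewrite mulr_ge0 ?expR_ge0 ?ltW.
  - exact: ltW (lap_density_gt0 b_gt0 _).
apply: le_trans (ler_wpM2r (powR_ge0 _ _) shift_al).
rewrite powRM ?expR_ge0 ?(ltW L2_gt0) // [X in _ <= X]mulrAC -powRD; last first.
  by apply/implyP => _; rewrite gt_eqF.
rewrite subrKC powRr1 ?(ltW L2_gt0) // mulrC /powR gt_eqF ?expR_gt0 // expRK.
by rewrite mulrA mulrN mulNr.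
Qed.

Lemma integral_lap_density_geo_mean_ge z1 z2 :
  ((expR (- al * `|z1 - z2| / b))%:E <=
   \int[mu]_y (L (y - z1) `^ al * L (y - z2) `^ (1 - al))%:E)%E.
Proof.
have mL (z : R) : measurable_fun setT (fun y : R => L (y - z)).
  exact/(measurableT_comp (measurable_lap_density (b := b)))/measurable_funB.
rewrite -[X in (X <= _)%E]mule1 -(integral_lap_density_shift b_gt0 z2).
rewrite -ge0_integralZl_EFin ?expR_ge0 //; last 2 first.
- by move=> y _; rewrite lee_fin; exact: ltW (lap_density_gt0 b_gt0 _).
- by apply/measurable_EFinP; exact: mL.
apply: ge0_le_integral => //.
- move=> y _; rewrite lee_fin mulr_ge0 ?expR_ge0 //.
  exact: ltW (lap_density_gt0 b_gt0 _).
- by apply/measurable_EFinP; apply: measurable_funM => //; exact: mL.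
- apply/measurable_EFinP; apply: measurable_funM;
    exact: measurableT_comp (measurable_powR _) (mL _).
- by move=> y _; rewrite -EFinM lee_fin lap_density_geo_mean_ge.
Qed.

End laplace_overlap.

(* [0 <= eps] covers an infinite integral, for which [Rintegral] returns 0 and
   so does [renyi_div]. *)
Lemma renyi_div_le {R : realType} (al eps : R) (P Q : R -> R) :
  al < 1 -> 0 <= eps ->
  ((expR ((al - 1) * eps))%:E <=
     \int[@lebesgue_measure R]_y (P y `^ al * Q y `^ (1 - al))%:E)%E ->
  renyi_div al P Q <= eps.
Proof.
move=> al_lt1 eps_ge0 le_J; rewrite /renyi_div /Rintegral.
set J := (\int[_]_(y in _) _)%E in le_J *.
have al1_lt0 : al - 1 < 0 by rewrite subr_lt0.
have [->|J_fin] := eqVneq J +oo%E; first by rewrite ln0 // mulr0.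
have J_ge0 : (0 <= J)%E by apply: le_trans le_J; rewrite lee_fin expR_ge0.
have le_fineJ : expR ((al - 1) * eps) <= fine J.
  by rewrite -lee_fin fineK // ge0_fin_numE // ltey.
rewrite -[leRHS](mulKf (ltr0_neq0 al1_lt0)).
apply: ler_wnM2l; first by rewrite invr_le0 ltW.
have fineJ_gt0 : 0 < fine J := lt_le_trans (expR_gt0 _) le_fineJ.
by rewrite -[leLHS]expRK ler_ln ?posrE ?expR_gt0.
Qed.

Theorem proposition1 (R : realType) (Secret Prior : Type)
    (PX : Secret -> Prior -> R -> R)
    (alpha eps b : R) (rho : Prior) (si sj : Secret)
    (pi : probability (R * R)%type R) :
  0 < alpha < 1 -> 0 < eps -> 0 < b ->
  (forall s r, is_density (PX s r)) ->
  is_coupling pi (PX si rho) (PX sj rho) ->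
  (\int[pi]_z (expR (- alpha * `|z.1 - z.2| / b))%:E >=
     (expR ((alpha - 1) * eps))%:E)%E ->
  renyi_div alpha (conv_density (lap_density b) (PX si rho))
                  (conv_density (lap_density b) (PX sj rho)) <= eps.
Proof.
move=> /andP[al_gt0 al_lt1] eps_gt0 b_gt0 dens pi_coupling le_overlap.
apply: (renyi_div_le _ _ _ _ al_lt1 (ltW eps_gt0) (le_trans le_overlap _)).
apply: (integral_conv_geo_mean_ge (measurable_lap_density (b := b))
          (lap_density_gt0 b_gt0) (lap_density_le b_gt0) al_gt0 al_lt1
          pi_coupling (dens _ _) (dens _ _)).
- apply: measurableT_comp; first exact: measurable_expR.
  apply: measurable_funM => //; apply: measurable_funM => //.
  by apply: measurableT_comp; [exact: normr_measurable|exact: measurable_funB].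
- by move=> z; exact: expR_ge0.
- by move=> z; exact: integral_lap_density_geo_mean_ge.
Qed.
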